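(* Let $\mathbf{x}_t$ solve $\mathrm d\mathbf{x}_t=a(\mathbf{x}_t)\,\mathrm dt+b(\mathbf{x}_t)\,\mathrm d\mathbf{w}_t$ on $\mathbb R^d$ with $\mathbf{x}_0\sim p_{\mathrm{data}}$, let $q_t$ be its transition density, and let $U_s(\mathbf{y}):=-\log\int q_s(\mathbf{y}\mid\mathbf{x})\exp(-U(\mathbf{x}))\,\mathrm d\mathbf{x}$ (with $U_0=U$). Then $$\mathrm{ED}_{q_t}(p_{\mathrm{data}},U)=-\mathbb E\Big[\int_0^t\mathrm dU_s(\mathbf{x}_s)\Big],$$ where $\int_0^t\mathrm dU_s(\mathbf{x}_s)$ is the Itô integral, i.e. $U_t(\mathbf{x}_t)=U_0(\mathbf{x}_0)+\int_0^t\mathrm dU_s(\mathbf{x}_s)$, and the expectation is over the process $(\mathbf{x}_s)_{0\le s\le t}$.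
   Context: $\mathrm{ED}_q(p_{\mathrm{data}},U):=\mathbb E_{p_{\mathrm{data}}(\mathbf{x})}[U(\mathbf{x})]-\mathbb E_{p_{\mathrm{data}}(\mathbf{x})}\mathbb E_{q(\mathbf{y}\mid\mathbf{x})}[U_q(\mathbf{y})]$ with $U_q(\mathbf{y}):=-\log\int q(\mathbf{y}\mid\mathbf{x})\exp(-U(\mathbf{x}))\,\mathrm d\mathbf{x}$. *)

From HB Require Import structures.
From mathcomp Require Import all_boot all_order all_algebra.
From mathcomp Require Import all_classical all_reals all_analysis.
Set Implicit Arguments. Unset Strict Implicit. Unset Printing Implicit Defensive.
Import Order.TTheory GRing.Theory Num.Theory.
Local Open Scope classical_set_scope.
Local Open Scope ring_scope.
Local Open Scope ereal_scope.

(* State space: a measurable type T with a reference measure lam (in the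
   paper: R^d with Lebesgue measure, all densities w.r.t. lam).
   A conditional density q is written q y x = q(y | x). *)

Definition Uq d (T : measurableType d) (R : realType)
  (lam : {measure set T -> \bar R}) (q : T -> T -> R) (U : T -> R) (y : T)
  : \bar R :=
  - lne (\int[lam]_x ((q y x) * expR (- U x))%:E).

Definition ED d (T : measurableType d) (R : realType)
  (lam : {measure set T -> \bar R}) (q : T -> T -> R) (p : T -> R)
  (U : T -> R) : \bar R :=
  \int[lam]_x ((p x)%:E * (U x)%:E)
  - \int[lam]_x ((p x)%:E * \int[lam]_y ((q y x)%:E * Uq lam q U y)).

Definition Ufam d (T : measurableType d) (R : realType)
  (lam : {measure set T -> \bar R}) (q : R -> T -> T -> R) (U : T -> R)
  (s : R) (y : T) : \bar R :=
  if s == 0%R then (U y)%:E else Uq lam (q s) U y.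

(* The Ito integral  \int_0^t dU_s(x_s), defined (as in the statement) by
   U_t(x_t) = U_0(x_0) + \int_0^t dU_s(x_s). *)
Definition ito_dU d (T : measurableType d) (R : realType) (Omega : Type)
  (lam : {measure set T -> \bar R}) (q : R -> T -> T -> R) (U : T -> R)
  (X : R -> Omega -> T) (t : R) (w : Omega) : \bar R :=
  Ufam lam q U t (X t w) - Ufam lam q U 0%R (X 0%R w).

From HB Require Import structures.
From mathcomp Require Import all_boot all_order all_algebra.
From mathcomp Require Import all_classical all_reals all_analysis.
From mathcomp Require Import measurable_realfun.
Import Order.TTheory GRing.Theory Num.Theory.
Local Open Scope classical_set_scope.
Local Open Scope ring_scope.
Local Open Scope ereal_scope.

(* By definition of [ito_dU], the right-hand side is E[U(x_0)] - E[U_t(x_t)],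
   so both expectations have to be computed against the reference measure.
   x_0 has density p_data, and taking A to be the whole space in the
   transition identity shows that x_t has the mixture density
   r(y) = \int p_data(x) q_t(y|x) dx.  The Radon-Nikodym change of variables
   turns E[f(x_0)] into \int p_data f and E[f(x_t)] into \int r f, and Tonelli
   unfolds \int r f into \int p_data(x) \int q_t(y|x) f(y) dy dx.  For the
   signed integrand U_t this is done on positive and negative parts
   separately; their finiteness is the integrability of U_t(x_t). *)

Lemma measurable_lne (R : realType) : measurable_fun [set: \bar R] (@lne R).
Proof.
rewrite (_ : @lne R = fun x : \bar R => if x <= 0 then -oo else er_map (@ln R) x).
  apply: measurable_fun_ifT => //.
  - exact: measurable_fun_lee.
  - exact: (@measurable_er_map _ R R _ (@measurable_ln R)).
by apply/funext => -[r| |] //=; case: ifP.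
Qed.

(* Unlike [muleBr] there is no definedness condition: for [r >= 0] both sides
   also agree on [+oo - +oo = -oo]. *)
Lemma ge0_muleBr (R : realDomainType) (r : R) (a b : \bar R) :
  (0 <= r)%R -> 0 <= a -> 0 <= b -> r%:E * (a - b) = r%:E * a - r%:E * b.
Proof.
move=> r_ge0 a_ge0 b_ge0; have [->|bNy] := eqVneq b +oo; last first.
  by rewrite muleBr// fin_num_adde_defl// fin_numN ge0_fin_numE// ltey.
rewrite addeNy; move: r_ge0; rewrite le_eqVlt => /predU1P[<-|r_gt0].
  by rewrite !mul0e sube0.
by rewrite muleC gt0_mulNye ?lte_fin// gt0_muley ?lte_fin// addeNy.
Qed.

Section ge0_funeposneg_mul.
Context {T : Type} {R : realDomainType} (h f : T -> \bar R).
Hypothesis h_ge0 : forall x, 0 <= h x.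

Lemma ge0_funeposMl : (fun x => h x * f x)^\+ = (fun x => h x * f^\+ x).
Proof.
apply/funext => x; rewrite !funeposE; have [f_ge0|f_lt0] := leP 0 (f x).
  by rewrite !(max_idPl _)// mule_ge0.
by rewrite !(max_idPr _) ?mule0// ?(ltW f_lt0)// mule_ge0_le0// ltW.
Qed.

Lemma ge0_funenegMl : (fun x => h x * f x)^\- = (fun x => h x * f^\- x).
Proof.
apply/funext => x; rewrite !funenegE -muleN; have [f_le0|f_gt0] := leP (f x) 0.
  by rewrite !(max_idPl _) ?mule_ge0// oppe_ge0.
by rewrite !(max_idPr _) ?mule0// ?mule_ge0_le0// oppe_le0 ltW.
Qed.

End ge0_funeposneg_mul.

Section density.
Context {d} {T : measurableType d} {R : realType}.
Variables (lam : {sigma_finite_measure set T -> \bar R})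
  (nu : {finite_measure set T -> \bar R}) (h : T -> \bar R).
Hypotheses (mh : measurable_fun setT h) (h_ge0 : forall x, 0 <= h x)
  (nuE : forall A, measurable A -> nu A = \int[lam]_(x in A) h x).

Let nu_dom : nu `<< lam.
Proof.
apply/null_content_dominatesP => A mA lamA0; rewrite nuE//.
by rewrite null_set_integral//; exact: measurable_funTS.
Qed.

Let RN := Radon_Nikodym_SigmaFinite.f nu lam.

Let density_ae_eq_RN : ae_eq lam setT h RN.
Proof.
have h_int : lam.-integrable setT h.
  apply/integrableP; split => //.
  under eq_integral do rewrite gee0_abs//.
  by rewrite -nuE//; exact: (fin_num_fun_lty (fin_num_measure nu)).
apply: integral_ae_eq => //.
  exact: measurable_int (Radon_Nikodym_SigmaFinite.f_integrable nu_dom).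
move=> E _ mE; rewrite -nuE//.
exact: Radon_Nikodym_SigmaFinite.f_integral nu_dom _ mE.
Qed.

Lemma ge0_integral_density f : measurable_fun setT f -> (forall x, 0 <= f x) ->
  \int[nu]_x f x = \int[lam]_x (h x * f x).
Proof.
move=> mf f_ge0.
rewrite -(Radon_Nikodym_SigmaFinite.change_of_variables nu_dom)//.
have mRN : measurable_fun setT RN.
  exact: measurable_int (Radon_Nikodym_SigmaFinite.f_integrable nu_dom).
under [RHS]eq_integral do rewrite muleC.
apply: ae_eq_integral => //; try exact: emeasurable_funM.
exact/ae_eqe_mul2l/ae_eq_sym.
Qed.

Lemma integral_density f : measurable_fun setT f ->
  \int[nu]_x f x = \int[lam]_x (h x * f x).
Proof.
move=> mf; rewrite integralE [RHS]integralE ge0_funeposMl// ge0_funenegMl//.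
by rewrite !ge0_integral_density//; [exact: measurable_funeneg|
                                     exact: measurable_funepos].
Qed.

Lemma integrable_density f : nu.-integrable setT f ->
  lam.-integrable setT (fun x => h x * f x).
Proof.
move=> /integrableP[mf f_fin]; apply/integrableP; split.
  exact: emeasurable_funM.
under eq_integral do rewrite abseM gee0_abs//.
by rewrite -ge0_integral_density//; exact: measurableT_comp.
Qed.

End density.

Section law_density.
Context {d d'} {Omega : measurableType d} {T : measurableType d'} {R : realType}.
Variables (P : probability Omega R) (Y : {RV P >-> T})
  (lam : {sigma_finite_measure set T -> \bar R}) (h : T -> \bar R).
Hypotheses (mh : measurable_fun setT h) (h_ge0 : forall y, 0 <= h y)
  (lawY : forall A, measurable A -> P (Y @^-1` A) = \int[lam]_(y in A) h y).

Lemma integral_law_density f : measurable_fun setT f ->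
  P.-integrable setT (f \o Y) -> \int[P]_w f (Y w) = \int[lam]_y (h y * f y).
Proof.
by move=> mf f_int; rewrite -integral_distribution//; exact: integral_density.
Qed.

Lemma integrable_law_density f : measurable_fun setT f ->
  P.-integrable setT (f \o Y) -> lam.-integrable setT (fun y => h y * f y).
Proof.
move=> mf f_int; apply: (@integrable_density _ _ _ lam (distribution P Y)) => //.
exact: integrable_pushforward.
Qed.

End law_density.

Section mixture_density.
Context {d} {T : measurableType d} {R : realType}.
Variables (lam : {sigma_finite_measure set T -> \bar R})
  (p : T -> R) (k : T -> T -> R).
Hypotheses (mp : measurable_fun setT p) (p_ge0 : forall x, (0 <= p x)%R)
  (mk : measurable_fun setT (fun yx : T * T => k yx.1 yx.2))
  (k_ge0 : forall y x, (0 <= k y x)%R).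

Definition mixture_density y := \int[lam]_x (p x * k y x)%:E.

Let mpk : measurable_fun setT (fun yx : T * T => (p yx.2 * k yx.1 yx.2)%:E).
Proof.
apply/measurable_EFinP; apply: measurable_funM => //.
exact: measurableT_comp mp measurable_snd.
Qed.

Lemma measurable_mixture_density : measurable_fun setT mixture_density.
Proof.
apply: (measurable_fun_fubini_tonelli_F _ mpk) => z.
by rewrite lee_fin mulr_ge0.
Qed.

Lemma mixture_density_ge0 y : 0 <= mixture_density y.
Proof. by apply: integral_ge0 => x _; rewrite lee_fin mulr_ge0. Qed.

Lemma measurable_kernel_integral g :
  measurable_fun setT g -> (forall y, 0 <= g y) ->
  measurable_fun setT (fun x => \int[lam]_y ((k y x)%:E * g y)).
Proof.
move=> mg g_ge0.
have mkg : measurable_fun setT (fun xy : T * T => (k xy.2 xy.1)%:E * g xy.2).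
  apply: emeasurable_funM; last exact: measurableT_comp mg measurable_snd.
  apply/measurable_EFinP; exact: (measurableT_comp mk (@measurable_swap _ _ T T)).
apply: (measurable_fun_fubini_tonelli_F _ mkg) => z.
by rewrite mule_ge0// lee_fin.
Qed.

Lemma ge0_integral_mixture_density g :
  measurable_fun setT g -> (forall y, 0 <= g y) ->
  \int[lam]_y (mixture_density y * g y) =
  \int[lam]_x ((p x)%:E * \int[lam]_y ((k y x)%:E * g y)).
Proof.
move=> mg g_ge0.
transitivity (\int[lam]_y \int[lam]_x ((p x * k y x)%:E * g y)).
  apply: eq_integral => y _; rewrite ge0_integralZr//.
  - exact: (measurable_fun_pair2 y mpk).
  - by move=> x _; rewrite lee_fin mulr_ge0.
have mpkg : measurable_fun setT
    (fun yx : T * T => (p yx.2 * k yx.1 yx.2)%:E * g yx.1).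
  exact: emeasurable_funM mpk (measurableT_comp mg measurable_fst).
rewrite (fubini_tonelli _ mpkg); last by move=> z; rewrite mule_ge0// lee_fin mulr_ge0.
apply: eq_integral => x _; rewrite -ge0_integralZl ?lee_fin//.
- by apply: eq_integral => y _; rewrite EFinM muleA.
- exact/emeasurable_funM/mg/measurable_EFinP/(measurable_fun_pair1 x mk).
- by move=> y _; rewrite mule_ge0// lee_fin.
Qed.

Lemma integral_mixture_density_in B : measurable B ->
  \int[lam]_(y in B) mixture_density y =
  \int[lam]_x ((p x)%:E * \int[lam]_(y in B) (k y x)%:E).
Proof.
move=> mB; have mB1 : measurable_fun setT (fun y => (\1_B y)%:E : \bar R).
  exact/measurable_EFinP/measurable_indic.
have patch_indic (f : T -> \bar R) y : (f \_ B) y = f y * (\1_B y)%:E.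
  by rewrite patchE indicE; case: ifP; rewrite ?mule1 ?mule0.
rewrite integral_mkcond; under eq_integral do rewrite patch_indic.
rewrite ge0_integral_mixture_density//; apply: eq_integral => x _.
by rewrite [in RHS]integral_mkcond; under [in RHS]eq_integral do rewrite patch_indic.
Qed.

Let integrable_kernel_integral g :
  measurable_fun setT g -> (forall y, 0 <= g y) ->
  lam.-integrable setT (fun y => mixture_density y * g y) ->
  lam.-integrable setT (fun x => (p x)%:E * \int[lam]_y ((k y x)%:E * g y)).
Proof.
move=> mg g_ge0.
have abs_mixg : \int[lam]_y `|mixture_density y * g y| =
                \int[lam]_y (mixture_density y * g y).
  by apply: eq_integral => y _; rewrite gee0_abs// mule_ge0// mixture_density_ge0.
have abs_pkg : \int[lam]_x `|(p x)%:E * \int[lam]_y ((k y x)%:E * g y)| =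
               \int[lam]_x ((p x)%:E * \int[lam]_y ((k y x)%:E * g y)).
  apply: eq_integral => x _; rewrite gee0_abs// mule_ge0 ?lee_fin//.
  by apply: integral_ge0 => y _; rewrite mule_ge0 ?lee_fin.
move=> /integrableP[_]; rewrite abs_mixg ge0_integral_mixture_density// -abs_pkg.
move=> pkg_fin; apply/integrableP; split => //.
exact/emeasurable_funM/measurable_kernel_integral/g_ge0/mg/measurable_EFinP.
Qed.

Lemma integral_mixture_density g : measurable_fun setT g ->
  lam.-integrable setT (fun y => mixture_density y * g y) ->
  \int[lam]_y (mixture_density y * g y) =
  \int[lam]_x ((p x)%:E * \int[lam]_y ((k y x)%:E * g y)).
Proof.
move=> mg mixg_int.
have [mix_pos mix_neg] := (integrable_funepos measurableT mixg_int,
                           integrable_funeneg measurableT mixg_int).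
rewrite ge0_funeposMl in mix_pos; last exact: mixture_density_ge0.
rewrite ge0_funenegMl in mix_neg; last exact: mixture_density_ge0.
rewrite integralE ge0_funeposMl ?ge0_funenegMl; try exact: mixture_density_ge0.
have [mg_pos mg_neg] := (measurable_funepos mg, measurable_funeneg mg).
rewrite !ge0_integral_mixture_density// -integralB//; last 2 first.
- exact: integrable_kernel_integral.
- exact: integrable_kernel_integral.
apply: eq_integral => x _; rewrite -ge0_muleBr//; last 2 first.
- by apply: integral_ge0 => y _; rewrite mule_ge0 ?lee_fin ?funepos_ge0.
- by apply: integral_ge0 => y _; rewrite mule_ge0 ?lee_fin ?funeneg_ge0.
rewrite [in RHS]integralE; congr (_ * (_ - _)); apply: eq_integral => y _.
- by rewrite !funeposE maxe_pMr ?lee_fin// mule0.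
- by rewrite !funenegE -muleN maxe_pMr ?lee_fin// mule0.
Qed.

Lemma law_mixture_density d' (Omega : measurableType d')
    (P : {measure set Omega -> \bar R}) (Y0 Y : Omega -> T) :
    (forall A B, measurable A -> measurable B ->
       P (Y0 @^-1` A `&` Y @^-1` B) =
       \int[lam]_(x in A) ((p x)%:E * \int[lam]_(y in B) (k y x)%:E)) ->
  forall B, measurable B -> P (Y @^-1` B) = \int[lam]_(y in B) mixture_density y.
Proof.
move=> lawY0Y B mB; rewrite integral_mixture_density_in//.
by rewrite -[Y @^-1` B]setTI -(preimage_setT Y0) lawY0Y.
Qed.

Lemma integral_law_mixture_density d' (Omega : measurableType d')
    (P : probability Omega R) (Y : {RV P >-> T}) :
    (forall B, measurable B ->
       P (Y @^-1` B) = \int[lam]_(y in B) mixture_density y) ->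
  forall f, measurable_fun setT f -> P.-integrable setT (f \o Y) ->
  \int[P]_w f (Y w) = \int[lam]_x ((p x)%:E * \int[lam]_y ((k y x)%:E * f y)).
Proof.
move=> lawY f mf f_int.
have [mmix mix_ge0] := (measurable_mixture_density, mixture_density_ge0).
rewrite (integral_law_density P Y lam _ mmix mix_ge0 lawY)//.
exact/integral_mixture_density/(integrable_law_density P Y lam _ mmix mix_ge0 lawY).
Qed.

End mixture_density.

Lemma measurable_Uq {d} {T : measurableType d} {R : realType}
    (lam : {sigma_finite_measure set T -> \bar R}) (k : T -> T -> R) (U : T -> R) :
    measurable_fun setT (fun yx : T * T => k yx.1 yx.2) ->
    (forall y x, (0 <= k y x)%R) -> measurable_fun setT U ->
  measurable_fun setT (Uq lam k U).
Proof.
move=> mk k_ge0 mU.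
have mexpNU : measurable_fun setT (fun x => expR (- U x)).
  by apply: measurableT_comp => //; exact: measurableT_comp.
rewrite (_ : Uq lam k U =
    fun y => - lne (mixture_density lam (fun x => expR (- U x)) k y)).
  apply: measurableT_comp; first exact: oppe_measurable.
  apply: measurableT_comp; first exact: measurable_lne.
  by apply: measurable_mixture_density => // x; rewrite expR_ge0.
apply/funext => y; rewrite /Uq /mixture_density; congr (- lne _).
by apply: eq_integral => x _; rewrite mulrC.
Qed.

Section sigma_finite_measure_of.
Context {d} {T : measurableType d} {R : realType} {lam : {measure set T -> \bar R}}.

(* The proof argument makes the sigma-finite instance below canonical. *)
Definition sigma_finite_measure_of (_ : sigma_finite setT lam) : set T -> \bar R :=
  lam.

Variable lam_sfin : sigma_finite setT lam.
HB.instance Definition _ := Measure.copy (sigma_finite_measure_of lam_sfin) lam.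
HB.instance Definition _ := Measure_isSigmaFinite.Build _ _ _
  (sigma_finite_measure_of lam_sfin) lam_sfin.

End sigma_finite_measure_of.

Theorem proposition4 (R : realType)
  (dT : measure_display) (T : measurableType dT)
  (lam : {measure set T -> \bar R}) (lam_sfin : sigma_finite setT lam)
  (dO : measure_display) (Omega : measurableType dO)
  (P : probability Omega R)
  (X : R -> Omega -> T) (q : R -> T -> T -> R)
  (p_data : T -> R) (U : T -> R) (t : R)
  (* standing regularity *)
  (t_gt0 : (0 < t)%R)
  (mX : forall s, (0 <= s)%R -> measurable_fun setT (X s))
  (mp : measurable_fun setT p_data) (p_ge0 : forall x, (0 <= p_data x)%R)
  (p_int1 : \int[lam]_x (p_data x)%:E = 1)
  (mq : forall s, (0 < s)%R ->
          measurable_fun setT (fun yx : T * T => q s yx.1 yx.2))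
  (q_ge0 : forall s y x, (0 < s)%R -> (0 <= q s y x)%R)
  (q_int1 : forall s x, (0 < s)%R -> \int[lam]_y (q s y x)%:E = 1)
  (mU : measurable_fun setT U)
  (* x_0 ~ p_data *)
  (X0_law : forall A, measurable A ->
     P (X 0%R @^-1` A) = \int[lam]_(x in A) (p_data x)%:E)
  (* q_s is the transition density of the process: (x_0, x_s) has joint
     density p_data(x) q_s(y|x) *)
  (Xs_trans : forall s, (0 < s)%R -> forall A B, measurable A -> measurable B ->
     P (X 0%R @^-1` A `&` X s @^-1` B)
     = \int[lam]_(x in A) ((p_data x)%:E * \int[lam]_(y in B) (q s y x)%:E))
  (* the expectations involved are well defined *)
  (U0_int : P.-integrable setT (fun w => (U (X 0%R w))%:E))
  (Ut_int : P.-integrable setT (fun w => Ufam lam q U t (X t w))) :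
  ED lam (q t) p_data U = - \int[P]_w ito_dU lam q U X t w.
Proof.
pose L := sigma_finite_measure_of lam_sfin.
have Ufam0 : Ufam lam q U 0 = fun y => (U y)%:E.
  by apply/funext => y; rewrite /Ufam eqxx.
have Ufamt : Ufam lam q U t = Uq lam (q t) U.
  by apply/funext => y; rewrite /Ufam gt_eqF.
rewrite Ufamt in Ut_int.
have qt_ge0 y x : (0 <= q t y x)%R by exact: q_ge0.
have mUt : measurable_fun setT (Uq lam (q t) U).
  exact (@measurable_Uq _ _ _ L (q t) U (mq t t_gt0) qt_ge0 mU).
have EU0 : \int[P]_w (U (X 0%R w))%:E = \int[lam]_x ((p_data x)%:E * (U x)%:E).
  by apply: (integral_law_density P (mfun_Sub (mem_set (mX 0%R (lexx 0%R)))) L) => //;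
    exact/measurable_EFinP.
have law_Xt := law_mixture_density L p_data (q t) mp p_ge0 (mq t t_gt0) qt_ge0
  _ _ P (X 0%R) (X t) (Xs_trans t t_gt0).
have EUt := integral_law_mixture_density L p_data (q t) mp p_ge0 (mq t t_gt0)
  qt_ge0 _ _ P (mfun_Sub (mem_set (mX t (ltW t_gt0)))) law_Xt _ mUt Ut_int.
rewrite /ED -EU0 -EUt /ito_dU Ufamt Ufam0 (integralB measurableT Ut_int U0_int).
by rewrite fin_num_oppeB ?(integrable_fin_num measurableT U0_int)// addeC.
Qed.
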